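(* For every $A\ge0$ and $T>0$ there is $B\ge0$ (depending only on $A$, $T$ and $f,r$) such that: if $y$ solves $y_t+f(y)_x=y_{xx}+r(y)$ on $[0,1]\times(0,T)$ with $y(0,t)=y(1,t)=0$ and $\|y(\cdot,0)\|_\infty\le A$, then $\|y(\cdot,t)\|_\infty\le B$ for all $t<T$.
   Context: Standing assumptions: $f,r\in C^2(\mathbb R)$ and $\int_{-\infty}^0\frac{dy}{|r(y)|+1}=\int_0^\infty\frac{dy}{|r(y)|+1}=\infty$. Solutions are classical solutions with initial data in $H^1_0(0,1)$. *)

From HB Require Import structures.
From mathcomp Require Import all_boot all_order all_algebra.
From mathcomp Require Import all_classical all_reals all_analysis.
Set Implicit Arguments. Unset Strict Implicit. Unset Printing Implicit Defensive.
Import Order.TTheory GRing.Theory Num.Theory.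
Import numFieldNormedType.Exports.
Local Open Scope classical_set_scope.
Local Open Scope ring_scope.

Definition C2 {R : realType} (f : R -> R) : Prop :=
  (forall x, derivable f x 1) /\
  (forall x, derivable (derive1 f) x 1) /\
  continuous (derive1 (derive1 f)).

Definition growth_cond {R : realType} (r : R -> R) : Prop :=
  (\int[@lebesgue_measure R]_(s in `]-oo, (0%R:R)]) ((`|r s| + 1)^-1)%R%:E = +oo)%E /\
  (\int[@lebesgue_measure R]_(s in `[(0%R:R), +oo[) ((`|r s| + 1)^-1)%R%:E = +oo)%E.

(* H^1_0(0,1): (the continuous representative of) y0 is the primitive
   x |-> int_0^x g of some g in L^2(0,1), and vanishes at 0 and 1. *)
Definition H10 {R : realType} (y0 : R -> R) : Prop :=
  exists g : R -> R,
    measurable_fun `[(0:R), 1] g /\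
    (\int[@lebesgue_measure R]_(s in `[(0%R:R), 1%R]) ((g s) ^+ 2)%R%:E < +oo)%E /\
    (forall x, 0 <= x <= 1 ->
       y0 x = Rintegral (@lebesgue_measure R) `[(0:R), x] g) /\
    y0 0 = 0 /\ y0 1 = 0.

Definition dx {R : realType} (y : R -> R -> R) (x t : R) : R :=
  derive1 (fun z => y z t) x.
Definition dxx {R : realType} (y : R -> R -> R) (x t : R) : R :=
  derive1 (fun z => dx y z t) x.
Definition dt {R : realType} (y : R -> R -> R) (x t : R) : R :=
  derive1 (fun s => y x s) t.

Definition uncurry2 {R : realType} (F : R -> R -> R) : R * R -> R :=
  fun p => F p.1 p.2.

Definition interior_QT {R : realType} (T : R) : set (R * R) :=
  [set p | 0 < p.1 < 1 /\ 0 < p.2 < T].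

Definition classical_solution {R : realType} (f r : R -> R) (T : R)
    (y : R -> R -> R) : Prop :=
  {within [set p : R * R | 0 <= p.1 <= 1 /\ 0 <= p.2 < T],
     continuous (uncurry2 y)} /\
  (forall x t, 0 < x < 1 -> 0 < t < T ->
     [/\ derivable (fun z => y z t) x 1,
         derivable (fun z => dx y z t) x 1,
         derivable (fun s => y x s) t 1 &
         derivable (fun z => f (y z t)) x 1]) /\
  {within interior_QT T, continuous (uncurry2 (dx y))} /\
  {within interior_QT T, continuous (uncurry2 (dxx y))} /\
  {within interior_QT T, continuous (uncurry2 (dt y))} /\
  (forall x t, 0 < x < 1 -> 0 < t < T ->
     dt y x t + derive1 (fun z => f (y z t)) x = dxx y x t + r (y x t)) /\
  (forall t, 0 <= t < T -> y 0 t = 0 /\ y 1 t = 0) /\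
  H10 (fun x => y x 0).

(* Let G be the primitive of 1/(|r| + 1) vanishing at 0.  Where x |-> y(x,t)
   attains a positive maximum, y_x = 0 kills the flux term and y_xx <= 0, so
   the equation gives y_t <= r(y), hence (G o y)_t <= |r(y)|/(|r(y)| + 1) < 1.
   A maximum of G(y(x,s)) - s over [0,1] x [0,t] exceeding G(A) thus cannot lie
   on the initial line or on the lateral boundary (where y = 0), and elsewhere
   (G o y)_t - 1 < 0 contradicts maximality in s; so G(y(x,t)) <= G(A) + t.  The
   growth condition makes G unbounded, which turns this into an upper bound
   on y; the same argument for -y, whose reaction term is -r(-.), bounds y
   from below. *)

From HB Require Import structures.
From mathcomp Require Import all_boot all_order all_algebra.
From mathcomp Require Import all_classical all_reals all_analysis.
From mathcomp Require Import lra measurable_realfun.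
Set Implicit Arguments.
Unset Strict Implicit.
Unset Printing Implicit Defensive.
Import Order.TTheory GRing.Theory Num.Theory.
Import numFieldNormedType.Exports.
Local Open Scope classical_set_scope.
Local Open Scope ring_scope.

Section derivative_tests.
Variable R : realType.
Implicit Types (u : R -> R) (a b x d : R).

Lemma derivable_continuous_at u x : derivable u x 1 -> {for x, continuous u}.
Proof. by move=> /derivable1_diffP /differentiable_continuous. Qed.

Lemma is_derive_unique u x d1 d2 :
  is_derive x 1 u d1 -> is_derive x 1 u d2 -> d1 = d2.
Proof.
by move=> ud1 ud2; rewrite -(@derive_val _ _ _ _ _ _ _ ud1) (@derive_val _ _ _ _ _ _ _ ud2).
Qed.

Lemma is_derive_gt0_nbhs u x d : is_derive x 1 u d -> 0 < d ->
  \forall z \near x, (x < z -> u x < u z) /\ (z < x -> u z < u x).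
Proof.
move=> /is_derive1_caratheodory[g [ugx gx <-]] g0.
apply: filterS (cvgr_gt _ gx _ g0) => z gz0.
split=> xz; rewrite -subr_gt0; first by rewrite ugx pmulr_rgt0 // subr_gt0.
by rewrite -opprB ugx oppr_gt0 pmulr_rlt0 // subr_lt0.
Qed.

Lemma derive_ge0_at_left_max u x d : is_derive x 1 u d ->
  (\forall z \near x^'-, u z <= u x) -> 0 <= d.
Proof.
move=> ud ux; rewrite leNgt; apply/negP => d0.
have Nd0 : 0 < - d by rewrite oppr_gt0.
have uNx : \forall z \near x^'-, u x < u z.
  apply: filterS (is_derive_gt0_nbhs (is_deriveN ud) Nd0) => z [_ /[apply]].
  by rewrite ltrN2.
have /filter_ex[_ []] : \forall z \near x^'-, False.
  by apply: filterS2 ux uNx => z; rewrite ltNge => ->.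
Qed.

Lemma derive2_le0_at_interior_max u u' a b x d : a < x < b ->
  (forall z, a < z < b -> is_derive z 1 u (u' z)) -> is_derive x 1 u' d ->
  (forall z, a <= z <= b -> u z <= u x) -> u' x = 0 /\ d <= 0.
Proof.
move=> /andP[ax xb] du du' umax.
have du'x0 : u' x = 0.
  apply: (is_derive_unique (du x _)); first by rewrite ax.
  apply: (@derive1_at_max _ u a b).
  - by rewrite ltW // (lt_trans ax).
  - by move=> z /[!in_itv]/= /du[].
  - by rewrite in_itv/= ax.
  - by move=> z /[!in_itv]/= /andP[az zb]; apply: umax; rewrite !ltW.
split=> //; rewrite leNgt; apply/negP => d0.
case: (is_derive_gt0_nbhs du' d0) => e /= e0; rewrite du'x0 => u'pos.
pose z := Num.min (x + e / 2) ((x + b) / 2).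
have xz : x < z by rewrite lt_min; apply/andP; split; lra.
have zb : z < b by rewrite gt_min; apply/orP; right; lra.
have ze : z < x + e by rewrite gt_min; apply/orP; left; lra.
have du_xz y : y \in `]x, z[ -> is_derive y 1 u (u' y).
  by rewrite in_itv/= => /andP[xy yz]; apply: du; rewrite (lt_trans ax) ?(lt_trans yz).
have cu : {within `[x, z], continuous u}.
  apply: derivable_within_continuous => y /[!in_itv]/= /andP[xy yz].
  by case: (du y _) => //; rewrite (lt_le_trans ax xy) (le_lt_trans yz zb).
have [c /[!in_itv]/= /andP[xc cz] uzx] := MVT xz du_xz cu.
have cball : ball x e c by rewrite /ball/= ltr0_norm ?subr_lt0 //; lra.
have u'c := (u'pos c cball).1 xc.
have : u x < u z by rewrite -subr_gt0 uzx mulr_gt0 // subr_gt0.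
by rewrite ltNge umax // (ltW zb) (le_trans (ltW ax) (ltW xz)).
Qed.
End derivative_tests.

Section integral_unbounded.
Variable R : realType.
Local Notation mu := (@lebesgue_measure R).

Lemma nondecreasing_bigcup_integral_unbounded (h : R -> R) (F : (set R)^nat) :
    continuous h -> (forall z, 0 <= h z) ->
    {homo F : n m / (n <= m)%N >-> (n <= m)%O} -> (forall n, measurable (F n)) ->
    (\int[mu]_(x in \bigcup_n F n) (h x)%:E = +oo)%E ->
  forall M : R, exists n, (M%:E < \int[mu]_(x in F n) (h x)%:E)%E.
Proof.
move=> hc h0 F_nd mF hoo M.
have : (\int[mu]_(x in F i) (h x)%:E)%E @[i --> \oo] -->
    (\int[mu]_(x in \bigcup_i F i) (h x)%:E)%E.
  apply: ge0_nondecreasing_set_cvg_integral => //; last by move=> n x _; rewrite lee_fin.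
  move=> n; apply/measurable_EFinP; apply: measurable_funTS.
  exact: continuous_measurable_fun.
rewrite hoo => /cvgeyPge /(_ (M + 1)) /filter_ex[N MN].
by exists N; apply: lt_le_trans MN; rewrite lte_fin ltrDl.
Qed.

Lemma continuous_integral_itvE (f : R -> R) (a b : R) : continuous f ->
  (\int[mu]_(x in `[a, b]) (f x)%:E = (\int[mu]_(x in `[a, b]) f x)%:E)%E.
Proof.
move=> fc; rewrite /Rintegral fineK // integrable_fin_num //.
apply: continuous_compact_integrable; first exact: segment_compact.
exact: continuous_subspaceT.
Qed.

End integral_unbounded.

Section primitive_of_bounded_positive.
Variables (R : realType) (h : R -> R).
Hypothesis h_cont : continuous h.
Hypothesis h_gt0 : forall z, 0 < h z.
Hypothesis h_le1 : forall z, h z <= 1.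

Local Notation mu := (@lebesgue_measure R).
Local Notation G z := (parameterized_integral mu 0 z h).
Implicit Types a b z : R.

Let integrable_itv a b : mu.-integrable `[a, b] (EFin \o h).
Proof.
apply: continuous_compact_integrable; first exact: segment_compact.
exact: continuous_subspaceT.
Qed.

Lemma is_derive_primitive z : 0 < z -> is_derive z 1 (fun x => G x) (h z).
Proof.
move=> z0; have zz1 : z < z + 1 by rewrite ltrDl.
have [dG Gz] := continuous_FTC1_closed zz1 (integrable_itv 0 (z + 1)) z0 (@h_cont z).
by rewrite /parameterized_integral; apply: DeriveDef dG _; rewrite -derive1E.
Qed.

Lemma primitive_le0 z : z <= 0 -> G z = 0.
Proof.
rewrite /parameterized_integral le_eqVlt => /predU1P[->|z0].
  by rewrite set_itv1 Rintegral_set1.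
by rewrite set_itv_ge ?Rintegral_set0 // bnd_simp -ltNge.
Qed.

Lemma primitive_ge0 z : 0 <= G z.
Proof. by apply: Rintegral_ge0 => x _; exact: ltW. Qed.

Lemma primitive_le z : 0 <= z -> G z <= z.
Proof.
move=> z0; apply: (@le_trans _ _ (\int[mu]_(s in `[0, z]) cst 1 s)).
  apply: le_Rintegral => //.
  apply: continuous_compact_integrable; first exact: segment_compact.
  exact: continuous_subspaceT (@cst_continuous _ _ _).
have muz : fine (mu (`[0, z] : set R)) = z.
  rewrite lebesgue_measure_itv /= lte_fin; case: ifPn => [_|]; first by rewrite /= oppr0 addr0.
  by rewrite -leNgt => z_le0; apply/esym/eqP; rewrite eq_le z_le0.
by rewrite Rintegral_cst // mul1r muz.
Qed.

Lemma primitive_MVT a b : 0 < a -> a <= b ->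
  exists2 c, 0 < c & G b - G a = h c * (b - a).
Proof.
move=> a0 ab.
have dG x : x \in `]a, b[ -> is_derive x 1 (fun x => G x) (h x).
  by rewrite in_itv/= => /andP[ax _]; apply: is_derive_primitive; exact: lt_trans ax.
have cG : {within `[a, b], continuous (fun x => G x)}.
  apply: derivable_within_continuous => x /[!in_itv]/= /andP[ax _].
  by case: (is_derive_primitive (lt_le_trans a0 ax)).
have [c /[!in_itv]/= /andP[ac _] Gba] := MVT_segment ab dG cG.
by exists c => //; exact: lt_le_trans ac.
Qed.

Lemma le_primitive a b : a <= b -> G a <= G b.
Proof.
move=> ab; have [a0|a0] := leP a 0; first by rewrite primitive_le0 // primitive_ge0.
have [c _ Gba] := primitive_MVT a0 ab.
by rewrite -subr_ge0 Gba mulr_ge0 ?subr_ge0 // ltW.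
Qed.

Lemma lt_primitive a b : 0 <= a -> a < b -> G a < G b.
Proof.
move=> a0 ab; pose m := (a + b) / 2.
have [m0 am mb] : [/\ 0 < m, a < m & m < b] by rewrite /m; split; lra.
have [c _ Gbm] := primitive_MVT m0 (ltW mb).
have := le_primitive (ltW am).
have : 0 < h c * (b - m) by rewrite mulr_gt0 // subr_gt0.
lra.
Qed.

Lemma primitive_lipschitz a b : `|G b - G a| <= `|b - a|.
Proof.
wlog ab : a b / a <= b.
  move=> wlog_ab; have [/wlog_ab //|/ltW/wlog_ab] := leP a b.
  by rewrite distrC (distrC a).
rewrite !ger0_norm ?subr_ge0 ?le_primitive //.
have [a0|a0] := leP a 0.
  rewrite (primitive_le0 a0) subr0; have [b0|b0] := leP b 0.
    by rewrite primitive_le0 // subr_ge0.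
  by have := primitive_le (ltW b0); lra.
have [c _ ->] := primitive_MVT a0 ab.
by rewrite ler_piMl // subr_ge0.
Qed.

Lemma primitive_continuous : continuous (fun z => G z).
Proof.
move=> x; apply/cvgrPdist_lt => e e0; exists e => //= z.
exact/le_lt_trans/primitive_lipschitz.
Qed.

Lemma primitive_unbounded : (\int[mu]_(s in `[(0%R:R), +oo[) (h s)%:E = +oo)%E ->
  forall M, exists2 z, 0 <= z & M < G z.
Proof.
move=> hoo M.
have [n] : exists n : nat, (M%:E < \int[mu]_(x in `[(0%R:R), (0 + n%:R)%R]) (h x)%:E)%E.
  apply: (nondecreasing_bigcup_integral_unbounded (F := fun n : nat => _)) => //.
  - by move=> z; exact: ltW.
  - by move=> n m nm; apply/subsetPset/subset_itvl; rewrite bnd_simp lerD2l ler_nat.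
  - by rewrite -itv_bndy_bigcup_BRight.
by rewrite add0r continuous_integral_itvE // lte_fin => Mn; exists n%:R.
Qed.

Lemma primitive_opp_unbounded :
    (\int[mu]_(s in `]-oo, (0%R:R)]) (h s)%:E = +oo)%E ->
  forall M, exists2 z, 0 <= z & M < parameterized_integral mu 0 z (fun s => h (- s)).
Proof.
move=> hoo M.
have [n] : exists n : nat, (M%:E < \int[mu]_(x in `[(0 - n%:R)%R, (0%R:R)]) (h x)%:E)%E.
  apply: (nondecreasing_bigcup_integral_unbounded (F := fun n : nat => _)) => //.
  - by move=> z; exact: ltW.
  - by move=> n m nm; apply/subsetPset/subset_itvr; rewrite bnd_simp lerD2l lerN2 ler_nat.
  - by rewrite -itvNy_bnd_bigcup_BLeft.
rewrite sub0r -[X in `[_, X]]oppr0 integration_by_substitution_oppr ?ler0n //; last first.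
  exact: continuous_subspaceT.
rewrite continuous_integral_itvE ?lte_fin => [Mn|]; first by exists n%:R.
by move=> x; apply: continuous_comp; [exact: oppr_continuous | exact: h_cont].
Qed.

End primitive_of_bounded_positive.

Section max_principle.
Variables (R : realType) (T A : R) (y : R -> R -> R) (rho G : R -> R).
Implicit Types a b x t z : R.
Hypothesis A_ge0 : 0 <= A.
Hypothesis y_cont : {within [set p : R * R | 0 <= p.1 <= 1 /\ 0 <= p.2 < T],
  continuous (uncurry2 y)}.
Hypothesis y_dt_at_max : forall x t, 0 < x < 1 -> 0 < t < T ->
  (forall x', 0 <= x' <= 1 -> y x' t <= y x t) ->
  exists2 d, is_derive t 1 (y x) d & d <= rho (y x t).
Hypothesis y_boundary : forall t, 0 <= t < T -> y 0 t <= 0 /\ y 1 t <= 0.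
Hypothesis y_initial : forall x, 0 <= x <= 1 -> y x 0 <= A.
Hypothesis G_homo : {homo G : a b / a <= b}.
Hypothesis G_lt : forall a b, 0 <= a -> a < b -> G a < G b.
Hypothesis G_cont : continuous G.
Hypothesis G_deriv : forall z, 0 < z -> is_derive z 1 G (`|rho z| + 1)^-1.

Let psi (p : R * R) := G (uncurry2 y p) - p.2.
Let rect (t0 : R) : set (R * R) := `[(0:R), 1] `*` `[(0:R), t0].

Let psi_argmax t0 : 0 <= t0 < T ->
  exists2 p, rect t0 p & forall q, rect t0 q -> psi q <= psi p.
Proof.
move=> /andP[t0_ge0 t0T].
have rect_strip : rect t0 `<=` [set p | 0 <= p.1 <= 1 /\ 0 <= p.2 < T].
  move=> [a b]; rewrite /rect/= !in_itv/= => -[-> /andP[-> bt0]].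
  by rewrite (le_lt_trans bt0 t0T).
have psi_cont : {within rect t0, continuous psi}.
  have y_cont_rect := continuous_subspaceW rect_strip y_cont.
  move=> p; apply: cvgB; last exact: continuous_subspaceT (fun _ => cvg_snd) p.
  by apply: continuous_comp; [exact: y_cont_rect | exact: G_cont].
have rect_neq0 : rect t0 !=set0.
  by exists (0, 0); rewrite /rect/= !in_itv/= lexx ler01 t0_ge0.
have [p /[!inE] rp pmax] := compact_EVT_max rect_neq0
  (compact_setX (@segment_compact R 0 1) (@segment_compact R 0 t0)) psi_cont.
by exists p => // q rq; apply: pmax; rewrite inE.
Qed.

Let large_argmax_interior t0 xs ts : 0 <= t0 < T -> rect t0 (xs, ts) ->
  (forall q, rect t0 q -> psi q <= psi (xs, ts)) -> G A < psi (xs, ts) ->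
  [/\ 0 < xs < 1, 0 < ts < T, 0 < y xs ts &
      forall x', 0 <= x' <= 1 -> y x' ts <= y xs ts].
Proof.
move=> /andP[_ t0T]; rewrite /rect/= !in_itv/= => -[/andP[xs0 xs1] /andP[ts0 tst0]].
move=> psi_max GA_psi.
have tsT : 0 <= ts < T by rewrite ts0 (le_lt_trans tst0).
have A_y : A < y xs ts.
  rewrite ltNge; apply: contraTN GA_psi => /G_homo yA.
  by rewrite -leNgt /psi/= lerBlDr (le_trans yA) // lerDl.
split.
- have [y0ts y1ts] := y_boundary tsT.
  rewrite !lt_neqAle xs0 xs1 !andbT; apply/andP; split.
    by apply: contraTneq A_y => <-; rewrite -leNgt (le_trans y0ts).
  by apply: contraTneq A_y => ->; rewrite -leNgt (le_trans y1ts).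
- rewrite (le_lt_trans tst0 t0T) andbT lt_neqAle ts0 andbT.
  by apply: contraTneq A_y => <-; rewrite -leNgt y_initial // xs0.
- exact: le_lt_trans A_y.
move=> x' x'01; rewrite leNgt; apply/negP => /(G_lt (ltW (le_lt_trans A_ge0 A_y))).
have := psi_max (x', ts); rewrite /rect/= !in_itv/= x'01 ts0 tst0 /psi/=.
by move=> /(_ (conj isT isT)); lra.
Qed.

Let no_interior_argmax xs ts : 0 < xs < 1 -> 0 < ts < T -> 0 < y xs ts ->
  (forall x', 0 <= x' <= 1 -> y x' ts <= y xs ts) ->
  ~ (forall s, 0 <= s <= ts -> psi (xs, s) <= psi (xs, ts)).
Proof.
move=> xs01 /andP[ts0 tsT] y_gt0 y_max psi_max.
have [d yd d_le] := y_dt_at_max xs01 (introT andP (conj ts0 tsT)) y_max.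
set ys := y xs ts in y_gt0 y_max d_le.
have psi_d : is_derive ts 1 (fun s => G (y xs s) - s) ((`|rho ys| + 1)^-1 * d - 1).
  exact: is_deriveB (is_derive1_comp (G_deriv y_gt0) yd) (is_derive_id _ _).
have psi_left_max : \forall s \near ts^'-, G (y xs s) - s <= G (y xs ts) - ts.
  apply: filterS2 (nbhs_left_gt ts0) (nbhs_left_le ts) => s s0 sts.
  by apply: psi_max; rewrite ltW.
have := derive_ge0_at_left_max psi_d psi_left_max; apply/negP; rewrite -ltNge subr_lt0.
have rho_pos : 0 < `|rho ys| + 1 by rewrite ltr_wpDl.
rewrite mulrC ltr_pdivrMr // mul1r (le_lt_trans d_le) // (le_lt_trans (ler_norm _)) //.
by rewrite ltrDl.
Qed.

Lemma maximum_principle t x : 0 <= t < T -> 0 <= x <= 1 -> G (y x t) <= G A + t.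
Proof.
move=> tT x01; rewrite leNgt; apply/negP => G_big.
have t0 : 0 <= t by case/andP: tT.
have [[xs ts] rp psi_max] := psi_argmax tT.
have GA_psi : G A < psi (xs, ts).
  apply: lt_le_trans (psi_max (x, t) _); first by rewrite /psi/=; lra.
  by rewrite /rect/= !in_itv/= x01 t0 lexx.
have [xs01 tsT y_gt0 y_max] := large_argmax_interior tT rp psi_max GA_psi.
apply: no_interior_argmax xs01 tsT y_gt0 y_max _ => s /andP[s0 sts].
apply: psi_max; move: rp; rewrite /rect/= !in_itv/= => -[-> /andP[_ tst]].
by rewrite s0 (le_trans sts tst).
Qed.

End max_principle.

Section weight.
Variable R : realType.

Definition weight (rho : R -> R) (s : R) : R := (`|rho s| + 1)^-1.

Lemma weight_gt0 rho s : 0 < weight rho s.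
Proof. by rewrite invr_gt0 ltr_wpDl. Qed.

Lemma weight_le1 rho s : weight rho s <= 1.
Proof. by rewrite invf_le1 ?lerDr // ltr_wpDl. Qed.

Lemma weight_continuous rho : continuous rho -> continuous (weight rho).
Proof.
move=> rho_cont x; apply: cvgV; first by rewrite gt_eqF // ltr_wpDl.
by apply: cvgD; [exact: continuous_comp (rho_cont x) (@norm_continuous _ _ _) | exact: cvg_cst].
Qed.

End weight.

Section classical_solution_bounds.
Variables (R : realType) (f r : R -> R) (T A : R) (y : R -> R -> R).
Hypothesis f_derivable : forall u, derivable f u 1.
Hypothesis r_cont : continuous r.
Hypothesis y_sol : classical_solution f r T y.
Hypothesis A_ge0 : 0 <= A.
Hypothesis y_initial : forall x, 0 <= x <= 1 -> `|y x 0| <= A.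
Implicit Types x t : R.

Let solution_derivable x t : 0 < x < 1 -> 0 < t < T ->
  [/\ derivable (fun z => y z t) x 1, derivable (fun z => dx y z t) x 1
     & derivable (y x) t 1].
Proof. by move=> x01 t0T; have [_ [/(_ x t x01 t0T)[]]] := y_sol. Qed.

Let is_derive_dx x t : 0 < x < 1 -> 0 < t < T ->
  is_derive x 1 (fun z => y z t) (dx y x t).
Proof.
move=> x01 t0T; case: (solution_derivable x01 t0T) => + _ _.
by rewrite /dx derive1E => /derivableP.
Qed.

Let is_derive_dxx x t : 0 < x < 1 -> 0 < t < T ->
  is_derive x 1 (fun z => dx y z t) (dxx y x t).
Proof.
move=> x01 t0T; case: (solution_derivable x01 t0T) => _ + _.
by rewrite /dxx derive1E => /derivableP.
Qed.

Let is_derive_dt x t : 0 < x < 1 -> 0 < t < T -> is_derive t 1 (y x) (dt y x t).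
Proof.
move=> x01 t0T; case: (solution_derivable x01 t0T) => _ _.
by rewrite /dt derive1E => /derivableP.
Qed.

Let dt_at_critical x t : 0 < x < 1 -> 0 < t < T -> dx y x t = 0 ->
  dt y x t = dxx y x t + r (y x t).
Proof.
move=> x01 t0T dx0; have [_ [/(_ x t x01 t0T)[yx _ _ _] [_ [_ [_ [pde _]]]]]] := y_sol.
rewrite -pde // (@derive1_comp _ (fun z => y z t) f) //.
by rewrite -/(dx y x t) dx0 mulr0 addr0.
Qed.

Lemma dt_le_at_spatial_max x t : 0 < x < 1 -> 0 < t < T ->
  (forall x', 0 <= x' <= 1 -> y x' t <= y x t) -> dt y x t <= r (y x t).
Proof.
move=> x01 t0T y_max.
have [] := derive2_le0_at_interior_max x01
  (fun z z01 => is_derive_dx z01 t0T) (is_derive_dxx x01 t0T) y_max.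
by move=> /(dt_at_critical x01 t0T) ->; rewrite gerDr.
Qed.

Lemma dt_ge_at_spatial_min x t : 0 < x < 1 -> 0 < t < T ->
  (forall x', 0 <= x' <= 1 -> y x t <= y x' t) -> r (y x t) <= dt y x t.
Proof.
move=> x01 t0T y_min.
have Ny_max z : 0 <= z <= 1 -> - y z t <= - y x t by rewrite lerN2; exact: y_min.
have [/eqP] := derive2_le0_at_interior_max (u := fun z => - y z t) x01
  (fun z z01 => is_deriveN (is_derive_dx z01 t0T))
  (is_deriveN (is_derive_dxx x01 t0T)) Ny_max.
by rewrite oppr_eq0 oppr_le0 => /eqP/(dt_at_critical x01 t0T) ->; rewrite lerDr.
Qed.

Local Notation mu := (@lebesgue_measure R).

Lemma solution_upper_bound t x : 0 <= t < T -> 0 <= x <= 1 ->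
  parameterized_integral mu 0 (y x t) (weight r) <=
  parameterized_integral mu 0 A (weight r) + t.
Proof.
have [y_cont [_ [_ [_ [_ [_ [y_boundary _]]]]]]] := y_sol.
have w_cont := weight_continuous r_cont.
have w_gt0 := @weight_gt0 R r; have w_le1 := @weight_le1 R r.
apply: (maximum_principle (rho := r)
  (G := fun z => parameterized_integral mu 0 z (weight r))) => //.
- move=> x' t' x01 t0T y_max; exists (dt y x' t'); first exact: is_derive_dt.
  exact: dt_le_at_spatial_max.
- by move=> t' /y_boundary[-> ->].
- by move=> x' /y_initial; apply: le_trans; exact: ler_norm.
- by move=> a b; exact: le_primitive.
- by move=> a b; exact: lt_primitive.
- exact: primitive_continuous.
- by move=> z; exact: is_derive_primitive.
Qed.

Lemma solution_lower_bound t x : 0 <= t < T -> 0 <= x <= 1 ->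
  parameterized_integral mu 0 (- y x t) (fun s => weight r (- s)) <=
  parameterized_integral mu 0 A (fun s => weight r (- s)) + t.
Proof.
have [y_cont [_ [_ [_ [_ [_ [y_boundary _]]]]]]] := y_sol.
have w_cont : continuous (fun s => weight r (- s)).
  by move=> s; apply: continuous_comp; [exact: oppr_continuous | exact: weight_continuous].
have w_gt0 s := @weight_gt0 R r (- s); have w_le1 s := @weight_le1 R r (- s).
apply: (maximum_principle (y := fun x t => - y x t) (rho := fun z => - r (- z))
  (G := fun z => parameterized_integral mu 0 z (fun s => weight r (- s)))) => //.
- by move=> p; apply: cvgN; exact: y_cont.
- move=> x' t' x01 t0T Ny_max; exists (- dt y x' t'); first exact/is_deriveN/is_derive_dt.
  rewrite opprK lerN2; apply: dt_ge_at_spatial_min => // x'' x''01.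
  by rewrite -lerN2; exact: Ny_max.
- by move=> t' /y_boundary[-> ->]; rewrite oppr0.
- by move=> x' /y_initial; apply: le_trans; rewrite -normrN; exact: ler_norm.
- by move=> a b; exact: le_primitive.
- by move=> a b; exact: lt_primitive.
- exact: primitive_continuous.
- move=> z z0; apply: is_derive_eq; first exact: is_derive_primitive.
  by rewrite /weight normrN.
Qed.

End classical_solution_bounds.

Theorem lemma1 (R : realType) (f r : R -> R) :
  C2 f -> C2 r -> growth_cond r ->
  forall A T : R, 0 <= A -> 0 < T ->
  exists B : R, 0 <= B /\
    forall y : R -> R -> R,
      classical_solution f r T y ->
      (forall x, 0 <= x <= 1 -> `|y x 0| <= A) ->
      forall t, 0 <= t < T -> forall x, 0 <= x <= 1 -> `|y x t| <= B.
Proof.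
move=> [f_der _] [r_der _] [r_Noo r_oo] A T A0 _.
have r_cont : continuous r by move=> x; exact: derivable_continuous_at.
have w_cont := weight_continuous r_cont; have w_gt0 := @weight_gt0 R r.
have wN_cont : continuous (fun s => weight r (- s)).
  by move=> s; apply: continuous_comp; [exact: oppr_continuous | exact: w_cont].
have [z1 z1_ge0 G_z1] := primitive_unbounded w_cont w_gt0 r_oo
  (parameterized_integral lebesgue_measure 0 A (weight r) + T).
have [z2 z2_ge0 GN_z2] := primitive_opp_unbounded w_cont w_gt0 r_Noo
  (parameterized_integral lebesgue_measure 0 A (fun s => weight r (- s)) + T).
exists (Num.max z1 z2); split; first by rewrite le_max z1_ge0.
move=> y y_sol y_init t tT x x01; have [_ tltT] := andP tT.
have y_lt_z1 : y x t < z1.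
  rewrite ltNge; apply/negP => /(le_primitive w_cont w_gt0) G_le.
  have := le_trans G_le (solution_upper_bound f_der r_cont y_sol A0 y_init tT x01).
  by rewrite leNgt (lt_trans _ G_z1) // ltrD2l.
have Ny_lt_z2 : - y x t < z2.
  rewrite ltNge; apply/negP => /(le_primitive wN_cont (fun s => w_gt0 (- s))) G_le.
  have := le_trans G_le (solution_lower_bound f_der r_cont y_sol A0 y_init tT x01).
  by rewrite leNgt (lt_trans _ GN_z2) // ltrD2l.
rewrite ler_norml lerNl; apply/andP; split; apply/ltW.
  by apply: lt_le_trans Ny_lt_z2 _; rewrite le_max lexx orbT.
by apply: lt_le_trans y_lt_z1 _; rewrite le_max lexx.
Qed.
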